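(* Let $(N,+,* )$ be a nilpotent ring with adjoint operation $x\circ y=x+y+x*y$, let $S$ be a subring and $I$ a two-sided ideal of $N$ with $S\cap I=\{0\}$ and $N=S+I$. Then every $x\in N$ can be written uniquely as $x=s\circ i$ with $s\in S$, $i\in I$; define $x\bullet y=s\circ y\circ i$, so that $(N,+,\bullet)$ is a left brace, and let $r(x,y)=(\sigma_x(y),\tau_y(x))$ be its Yang–Baxter map. Let $X\subseteq N$ be such that $(X,r)$ is a solution of the set-theoretic Yang–Baxter equation, and let $J\subseteq I\cap X$ be a two-sided ideal of the ring $N$. Let $f,g:X\to X$ and $\wedge:X\times X\to X$ be maps and put $k(x)=f(x)\wedge g(x)$. Suppose that: $f$ is $\mathcal G(X,r)$-equivariant; $\sigma_x(y\wedge g(z))=\sigma_x(y)\wedge g(z)$ for all $x,y,z\in X$; $g(x+j)=g(x)$ whenever $x\in X$, $j\in J$, $x+j\in X$; and $k(x)-x\in J$ for all $x\in X$. Then $k$ is a reflection of $(X,r)$.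
   Context: A (left) brace is a triple $(B,+,\circ)$ with $(B,+)$ abelian group, $(B,\circ)$ group, and $x\circ(y+z)=x\circ y+x\circ z-x$. The Yang–Baxter map of the brace $(N,+,\bullet)$ is $r(x,y)=(\sigma_x(y),\tau_y(x))$ with $\sigma_x(y)=x\bullet y-x$ and $\tau_y(x)=(\sigma_x(y))^{-1}\bullet x-(\sigma_x(y))^{-1}$, inverses taken in $(N,\bullet)$. For $X\subseteq N$, $(X,r)$ is a solution of the set-theoretic Yang–Baxter equation if $r(X\times X)\subseteq X\times X$ and $(\mathrm{id}\times r)(r\times\mathrm{id})(\mathrm{id}\times r)=(r\times\mathrm{id})(\mathrm{id}\times r)(r\times\mathrm{id})$ on $X^3$. A map $k:X\to X$ is a reflection of $(X,r)$ if $r(\mathrm{id}\times k)r(\mathrm{id}\times k)=(\mathrm{id}\times k)r(\mathrm{id}\times k)r$ on $X\times X$; $k$ is $\mathcal G(X,r)$-equivariant if $k\sigma_x=\sigma_x k$ on $X$ for every $x\in X$. *)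

(* (additive group = zmodType; the non-unital ring product is
   an explicit operation since a nilpotent ring has no unit). *)
From HB Require Import structures.
From mathcomp Require Import all_boot all_order all_algebra.
From Stdlib Require Import ClassicalEpsilon.
Set Implicit Arguments. Unset Strict Implicit. Unset Printing Implicit Defensive.
Import GRing.Theory.
Local Open Scope ring_scope.

Section Defs.
Variables (N : zmodType) (mul : N -> N -> N).

Record nilpotent_ring : Prop := NilpotentRing {
  nr_assoc : forall x y z, mul x (mul y z) = mul (mul x y) z;
  nr_distl : forall x y z, mul (x + y) z = mul x z + mul y z;
  nr_distr : forall x y z, mul x (y + z) = mul x y + mul x z;
  nr_nilp  : exists n : nat, forall (x : N) (s : seq N),
               size s = n -> foldl mul x s = 0 }.

Record is_subring (S : N -> Prop) : Prop := IsSubring {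
  sr0 : S 0;
  srB : forall x y, S x -> S y -> S (x - y);
  srM : forall x y, S x -> S y -> S (mul x y) }.

Record is_ideal (I : N -> Prop) : Prop := IsIdeal {
  id0 : I 0;
  idB : forall x y, I x -> I y -> I (x - y);
  idMl : forall x y, I y -> I (mul x y);
  idMr : forall x y, I x -> I (mul x y) }.

Definition adj (x y : N) : N := x + y + mul x y.

Variables (S I : N -> Prop).

Definition decomp (x : N) : N * N :=
  epsilon (inhabits (0, 0)) (fun p => S p.1 /\ I p.2 /\ x = adj p.1 p.2).

Definition bul (x y : N) : N := adj (adj (decomp x).1 y) (decomp x).2.

Definition binv (x : N) : N :=
  epsilon (inhabits 0) (fun y => bul y x = 0 /\ bul x y = 0).

Definition sigma (x y : N) : N := bul x y - x.
Definition tau (y x : N) : N :=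
  bul (binv (sigma x y)) x - binv (sigma x y).

Definition ybr (p : N * N) : N * N := (sigma p.1 p.2, tau p.2 p.1).

End Defs.

Definition r12 {N : Type} (r : N * N -> N * N) (t : N * N * N) : N * N * N :=
  ((r (t.1.1, t.1.2)).1, (r (t.1.1, t.1.2)).2, t.2).
Definition r23 {N : Type} (r : N * N -> N * N) (t : N * N * N) : N * N * N :=
  (t.1.1, (r (t.1.2, t.2)).1, (r (t.1.2, t.2)).2).

Definition is_solution {N : Type} (X : N -> Prop) (r : N * N -> N * N) : Prop :=
  (forall x y, X x -> X y -> X (r (x, y)).1 /\ X (r (x, y)).2) /\
  (forall a b c, X a -> X b -> X c ->
     r23 r (r12 r (r23 r (a, b, c))) = r12 r (r23 r (r12 r (a, b, c)))).

Definition idk {N : Type} (k : N -> N) (p : N * N) : N * N := (p.1, k p.2).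

Definition is_reflection {N : Type} (X : N -> Prop) (r : N * N -> N * N)
  (k : N -> N) : Prop :=
  forall x y, X x -> X y ->
    r (idk k (r (idk k (x, y)))) = idk k (r (idk k (r (x, y)))).

(* Nilpotency makes (N, ∘) a group, the series Σ_k (-s)^k b being finite; with
   S ∩ I = 0 this gives the unique factorisation x = s ∘ i.  Then
   σ_x(y) = (1 + s) y (1 + i) is additive, preserves ideals and turns • into
   composition.  For j ∈ J one has j • w = w ∘ j, so σ_w' ≡ σ_w modulo J whenever
   w' ≡ w, and hence the same holds for inverses in (N, •) and for τ.
   In the reflection identity the first components are f(x) ∧ g(t) and
   f(x) ∧ g(t') with t ≡ t'; writing c for this common value, moving σ_c through
   f and ∧ turns the second components into f(w) ∧ g(y) and f(w) ∧ g(w) with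
   w ≡ y. *)

From Pilot Require Import Defs.
From mathcomp Require Import all_boot all_order all_algebra.
From Stdlib Require Import ClassicalEpsilon.
Set Implicit Arguments. Unset Strict Implicit. Unset Printing Implicit Defensive.
Import GRing.Theory.
Local Open Scope ring_scope.

Section SubClosed.
Variables (N : zmodType) (K : N -> Prop).
Hypothesis KB : forall u v, K u -> K v -> K (u - v).

Lemma closedN u : K u -> K (- u).
Proof. by move=> Ku; rewrite -sub0r; apply: KB => //; rewrite -(subrr u); apply: KB. Qed.

Lemma closedD u v : K u -> K v -> K (u + v).
Proof. by move=> Ku Kv; rewrite -(opprK v); apply/KB/closedN. Qed.

End SubClosed.

Section NilpotentRing.
Variables (N : zmodType) (mul : N -> N -> N).
Hypothesis Nnil : nilpotent_ring mul.

Let mulA := nr_assoc Nnil.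
Let mulDl := nr_distl Nnil.
Let mulDr := nr_distr Nnil.
Local Notation adj := (adj mul).

Lemma mul0l x : mul 0 x = 0.
Proof. by apply: (addrI (mul 0 x)); rewrite -mulDl !addr0. Qed.

Lemma mul0r x : mul x 0 = 0.
Proof. by apply: (addrI (mul x 0)); rewrite -mulDr !addr0. Qed.

Lemma mulNl x y : mul (- x) y = - mul x y.
Proof. by apply: (addrI (mul x y)); rewrite -mulDl !subrr mul0l. Qed.

Lemma adj0l x : adj 0 x = x.
Proof. by rewrite /Defs.adj mul0l add0r addr0. Qed.

Lemma adj0r x : adj x 0 = x.
Proof. by rewrite /Defs.adj mul0r !addr0. Qed.

Lemma adjA x y z : adj (adj x y) z = adj x (adj y z).
Proof.
rewrite /Defs.adj !mulDl !mulDr mulA !addrA.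
by rewrite [LHS](ACl (1*2*4*6*3*5*7)%AC).
Qed.

Lemma adj_closed (K : N -> Prop) :
  (forall u v, K u -> K v -> K (u - v)) ->
  (forall u v, K u -> K v -> K (mul u v)) ->
  forall u v, K u -> K v -> K (adj u v).
Proof. by move=> KB KM u v Ku Kv; apply/(closedD KB)/KM => //; apply: closedD. Qed.

Lemma foldl_mul_nseq t k : foldl mul t (nseq k.+1 t) = mul (foldl mul t (nseq k t)) t.
Proof.
have -> : nseq k.+1 t = rcons (nseq k t) t by elim: k => //= k ->.
by rewrite foldl_rcons.
Qed.

Lemma iter_mul_eq0 : exists n, forall t d, iter n (mul t) d = 0.
Proof.
have [n nilN] := nr_nilp Nnil; exists n.+1 => t d.
suff -> : iter n.+1 (mul t) d = mul (foldl mul t (nseq n t)) d.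
  by rewrite nilN ?size_nseq // mul0l.
elim: n {nilN} d => [|n IHn] d //.
by rewrite iterSr IHn foldl_mul_nseq mulA.
Qed.

(* The witness is the Neumann series [q = sum_(k < n) (-s)^k b], with [(-s)^n = 0]. *)
Lemma adj_eq_addr (K : N -> Prop) s b :
  (forall u v, K u -> K v -> K (u - v)) -> (forall u, K u -> K (mul s u)) ->
  K b -> exists2 q, K q & adj s q = s + b.
Proof.
move=> KB KM Kb; have [n nilN] := iter_mul_eq0.
suff [q Kq Eq] : exists2 q, K q & q + mul s q = b - iter n (mul (- s)) b.
  by exists q => //; rewrite /Defs.adj -addrA Eq nilN subr0.
have Kpow m : K (iter m (mul (- s)) b).
  by elim: m => //= m IHm; rewrite mulNl; apply: (closedN KB); apply: KM.
elim: n {nilN} => [|m [q Kq Eq]].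
  by exists (b - b); [apply: KB | rewrite subrr mul0r addr0].
exists (q + iter m (mul (- s)) b); first exact: closedD.
by rewrite mulDr addrACA Eq /= mulNl opprK addrA subrK.
Qed.

Lemma adj_inv (K : N -> Prop) s :
  (forall u v, K u -> K v -> K (u - v)) ->
  (forall u v, K u -> K v -> K (mul u v)) ->
  K s -> exists2 q, K q & adj s q = 0 /\ adj q s = 0.
Proof.
move=> KB KM Ks.
have rinv t : K t -> exists2 q, K q & adj t q = 0.
  move=> Kt; have [q Kq Eq] := adj_eq_addr KB (fun u => KM t u Kt) (closedN KB Kt).
  by exists q; rewrite // Eq subrr.
have [q Kq Eq] := rinv s Ks; have [q' _ Eq'] := rinv q Kq.
suff Eq's : q' = s by exists q => //; split; last rewrite -Eq's.
by rewrite -(adj0r s) -Eq' -adjA Eq adj0l.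
Qed.

Lemma adjI s : injective (adj s).
Proof.
have [q _ [_ Eqs]] := @adj_inv (fun=> True) s (fun _ _ _ _ => I) (fun _ _ _ _ => I) I.
by move=> u v Euv; rewrite -(adj0l u) -(adj0l v) -Eqs !adjA Euv.
Qed.

(* [sandwich s i u] is [(1 + s) u (1 + i)] computed in the unitization. *)
Definition sandwich s i u := u + mul s u + mul u i + mul (mul s u) i.

Lemma adj_sandwich s i u : adj (adj s u) i = adj s i + sandwich s i u.
Proof.
rewrite /Defs.adj /sandwich !mulDl !addrA.
by rewrite [LHS](ACl (1*4*5*2*3*6*7)%AC).
Qed.

Lemma sandwichD s i u v : sandwich s i (u + v) = sandwich s i u + sandwich s i v.
Proof.
rewrite /sandwich !mulDr !mulDl !addrA.
by rewrite [RHS](ACl (1*5*2*6*3*7*4*8)%AC).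
Qed.

Lemma sandwich0 s i : sandwich s i 0 = 0.
Proof. by apply: (addrI (sandwich s i 0)); rewrite -sandwichD !addr0. Qed.

Lemma sandwichB s i u v : sandwich s i (u - v) = sandwich s i u - sandwich s i v.
Proof. by apply: (addIr (sandwich s i v)); rewrite -sandwichD !subrK. Qed.

Lemma sandwich0l i u : sandwich 0 i u = u + mul u i.
Proof. by rewrite /sandwich !mul0l !addr0. Qed.

(* Both sides are the nonconstant part of [s ∘ s' ∘ u ∘ i' ∘ i]. *)
Lemma sandwichM s i s' i' u :
  sandwich s i (sandwich s' i' u) = sandwich (adj s s') (adj i' i) u.
Proof.
have E v : adj (adj s (adj (adj s' v) i')) i = adj (adj (adj s s') v) (adj i' i).
  by rewrite -!adjA.
have E0 := E 0; have Eu := E u.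
rewrite !(adj_sandwich s i) !(adj_sandwich s' i') in E0 Eu.
rewrite !(adj_sandwich (adj s s') (adj i' i)) in E0 Eu.
rewrite sandwich0 addr0 in E0.
rewrite sandwichD addrA E0 sandwich0 addr0 in Eu.
exact: addrI Eu.
Qed.

End NilpotentRing.

Section Brace.
Variables (N : zmodType) (mul : N -> N -> N) (S I : N -> Prop).
Hypothesis Nnil : nilpotent_ring mul.
Hypothesis Ssub : is_subring mul S.
Hypothesis Iideal : is_ideal mul I.
Hypothesis SI0 : forall x, S x -> I x -> x = 0.
Hypothesis SIsum : forall x, exists s i, S s /\ I i /\ x = s + i.

Local Notation adj := (adj mul).
Local Notation decomp := (decomp mul S I).
Local Notation bul := (bul mul S I).
Local Notation binv := (binv mul S I).
Local Notation sigma := (sigma mul S I).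
Local Notation tau := (tau mul S I).

Let I_mul u v : I u -> I v -> I (mul u v) := fun _ => idMl Iideal u (y := v).
Let S_adj := adj_closed (srB Ssub) (srM Ssub).
Let I_adj := adj_closed (idB Iideal) I_mul.

Lemma decomp_ex x : exists p : N * N, S p.1 /\ I p.2 /\ x = adj p.1 p.2.
Proof.
have [s [b [Ss [Ib ->]]]] := SIsum x.
have [i Ii <-] := adj_eq_addr Nnil (idB Iideal) (idMl Iideal s) Ib.
by exists (s, i).
Qed.

Lemma decomp_uniq s1 i1 s2 i2 : S s1 -> I i1 -> S s2 -> I i2 ->
  adj s1 i1 = adj s2 i2 -> s1 = s2 /\ i1 = i2.
Proof.
move=> Ss1 Ii1 Ss2 Ii2 E.
have Es : s1 = s2.
  apply/subr0_eq/SI0; first exact: (srB Ssub).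
  have -> : s1 - s2 = (i2 + mul s2 i2) - (i1 + mul s1 i1).
    apply: (addIr (s2 + (i1 + mul s1 i1))).
    by rewrite [RHS]addrCA subrK addrA subrK !addrA; exact: E.
  by apply: (idB Iideal); apply: (closedD (idB Iideal)) => //; apply: (idMl Iideal).
by split=> //; subst s2; apply: adjI E.
Qed.

Lemma decomp_spec x :
  S (decomp x).1 /\ I (decomp x).2 /\ x = adj (decomp x).1 (decomp x).2.
Proof. exact: epsilon_spec (decomp_ex x). Qed.

Lemma decomp_unique x : exists! p : N * N, S p.1 /\ I p.2 /\ x = adj p.1 p.2.
Proof.
have [p decp] := decomp_ex x; exists p; split=> // q [Sq [Iq Exq]].
case: p decp => s i /= [Ss [Ii Ex]].
by have [-> ->] := decomp_uniq Ss Ii Sq Iq (etrans (esym Ex) Exq); case: q {Sq Iq Exq}.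
Qed.

Lemma decomp_adj s i : S s -> I i -> decomp (adj s i) = (s, i).
Proof.
move=> Ss Ii; move: (decomp_spec (adj s i)).
case: (decomp _) => s' i' /= [Ss' [Ii' E]].
by have [-> ->] := decomp_uniq Ss' Ii' Ss Ii (esym E).
Qed.

Lemma decomp_ideal i : I i -> decomp i = (0, i).
Proof. by move=> Ii; rewrite -{1}(adj0l Nnil i) decomp_adj //; apply: sr0 Ssub. Qed.

Lemma sigmaE x y : sigma x y = sandwich mul (decomp x).1 (decomp x).2 y.
Proof.
have [_ [_ Ex]] := decomp_spec x.
by rewrite /sigma /bul (adj_sandwich Nnil) -Ex addrC addKr.
Qed.

Lemma bulE x y : bul x y = x + sigma x y.
Proof. by rewrite /sigma subrKC. Qed.

Lemma sigmaD x : {morph sigma x : u v / u + v}.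
Proof. by move=> u v; rewrite !sigmaE (sandwichD Nnil). Qed.

Lemma sigmaB x : {morph sigma x : u v / u - v}.
Proof. by move=> u v; rewrite !sigmaE (sandwichB Nnil). Qed.

Lemma sigma_idealE i u : I i -> sigma i u = u + mul u i.
Proof. by move=> Ii; rewrite sigmaE decomp_ideal // (sandwich0l Nnil). Qed.

Lemma sigma0 : sigma 0 =1 id.
Proof. by move=> u; rewrite sigma_idealE ?(mul0r Nnil) ?addr0 //; apply: id0 Iideal. Qed.

Lemma bul_ideal i x : I i -> bul i x = adj x i.
Proof. by move=> Ii; rewrite /bul decomp_ideal // (adj0l Nnil). Qed.

Lemma sigmaM x y z : sigma x (sigma y z) = sigma (bul x y) z.
Proof.
have [Sx [Ix Ex]] := decomp_spec x; have [Sy [Iy Ey]] := decomp_spec y.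
have -> : bul x y = adj (adj (decomp x).1 (decomp y).1) (adj (decomp y).2 (decomp x).2).
  by rewrite /bul [in LHS]Ey !(adjA Nnil).
by rewrite !sigmaE (sandwichM Nnil) decomp_adj //; [apply: S_adj | apply: I_adj].
Qed.

Lemma bulA x y z : bul x (bul y z) = bul (bul x y) z.
Proof. by rewrite bulE (bulE y) sigmaD sigmaM addrA -(bulE x y) -bulE. Qed.

Lemma binv_ex x : exists y, bul y x = 0 /\ bul x y = 0.
Proof.
have [Sx [Ix Ex]] := decomp_spec x.
have [s Ss [Exs Esx]] := adj_inv Nnil (srB Ssub) (srM Ssub) Sx.
have [i Ii [Exi Eix]] := adj_inv Nnil (idB Iideal) I_mul Ix.
exists (adj s i); rewrite /bul decomp_adj //=; split.
  by rewrite [in LHS]Ex -(adjA Nnil s) Esx (adj0l Nnil) Exi.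
by rewrite -(adjA Nnil _ s) Exs (adj0l Nnil) Eix.
Qed.

Lemma binv_spec x : bul (binv x) x = 0 /\ bul x (binv x) = 0.
Proof. exact: epsilon_spec (binv_ex x). Qed.

Lemma sigmaVK x : cancel (sigma x) (sigma (binv x)).
Proof. by move=> u; rewrite sigmaM (proj1 (binv_spec x)) sigma0. Qed.

Lemma sigmaKV x : cancel (sigma (binv x)) (sigma x).
Proof. by move=> u; rewrite sigmaM (proj2 (binv_spec x)) sigma0. Qed.

Lemma tauE x y : tau y x = sigma (binv (sigma x y)) x.
Proof. by []. Qed.

Lemma sigma_tau x y : sigma (sigma x y) (tau y x) = x.
Proof. exact: sigmaKV. Qed.

Lemma tau_tau x y : tau (tau y x) (sigma x y) = y.
Proof. by rewrite tauE sigma_tau sigmaVK. Qed.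

Variable J : N -> Prop.
Hypothesis Jideal : is_ideal mul J.
Hypothesis JI : forall j, J j -> I j.

Let JD := closedD (idB Jideal).

Lemma sigmaJ x j : J j -> J (sigma x j).
Proof.
move=> Jj; have Jsj := idMl Jideal (decomp x).1 Jj.
rewrite sigmaE /sandwich; apply: JD (idMr Jideal _ Jsj).
by apply: JD (idMr Jideal _ Jj); apply: JD.
Qed.

(* [w' = w ∘ j = j • w] with [j] in [J], and [sigma j] is the identity modulo [J]. *)
Lemma sigma_congr w w' z : J (w' - w) -> J (sigma w' z - sigma w z).
Proof.
move=> Jw; have [j Jj] := adj_eq_addr Nnil (idB Jideal) (idMl Jideal w) Jw.
rewrite subrKC -bul_ideal; last exact: JI.
move <-; rewrite -sigmaM sigma_idealE; last exact: JI.
by rewrite addrAC subrr add0r; apply: (idMl Jideal).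
Qed.

Lemma binv_congr w w' : J (w' - w) -> J (binv w' - binv w).
Proof.
move=> Jw; set p := binv w; set p' := binv w'.
have Jq : J (bul w' p).
  rewrite -[bul w' p]subr0 -(proj2 (binv_spec w)) -/p !bulE opprD addrACA.
  by apply: JD => //; apply: sigma_congr.
have -> : p = bul p' (bul w' p) by rewrite bulA (proj1 (binv_spec w')) bulE sigma0 add0r.
by rewrite bulE opprD addNKr; apply/(closedN (idB Jideal))/sigmaJ.
Qed.

Lemma tau_congr x v v' : J (v' - v) -> J (tau v' x - tau v x).
Proof.
by move=> Jv; rewrite !tauE; apply/sigma_congr/binv_congr; rewrite -sigmaB; apply: sigmaJ.
Qed.

Section Reflection.
Variables (X : N -> Prop) (f g : N -> N) (wedge : N -> N -> N).
Hypothesis X_ybr :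
  forall x y, X x -> X y -> X (ybr mul S I (x, y)).1 /\ X (ybr mul S I (x, y)).2.
Hypothesis Xf : forall x, X x -> X (f x).
Hypothesis Xg : forall x, X x -> X (g x).
Hypothesis Xwedge : forall x y, X x -> X y -> X (wedge x y).
Hypothesis f_sigma : forall x y, X x -> X y -> f (sigma x y) = sigma x (f y).
Hypothesis sigma_wedge : forall x y z, X x -> X y -> X z ->
  sigma x (wedge y (g z)) = wedge (sigma x y) (g z).
Hypothesis gJ : forall x j, X x -> J j -> X (x + j) -> g (x + j) = g x.

Let k x := wedge (f x) (g x).
Hypothesis kJ : forall x, X x -> J (k x - x).

Lemma X_sigma x y : X x -> X y -> X (sigma x y).
Proof. by move=> Xx Xy; case: (X_ybr Xx Xy). Qed.

Lemma X_tau x y : X x -> X y -> X (tau y x).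
Proof. by move=> Xx Xy; case: (X_ybr Xx Xy). Qed.

Lemma X_k x : X x -> X (k x).
Proof. by move=> Xx; apply: Xwedge; [apply: Xf | apply: Xg]. Qed.

Lemma g_congr a b : X a -> X b -> J (a - b) -> g a = g b.
Proof. by move=> Xa Xb Jab; rewrite -(subrKC b a) gJ ?subrKC. Qed.

Lemma sigma_k u w : X u -> X w -> sigma u (k w) = wedge (f (sigma u w)) (g w).
Proof. by move=> Xu Xw; rewrite /k sigma_wedge ?f_sigma //; apply: Xf. Qed.

Lemma g_tau_k x y : X x -> X y -> g (tau (k y) x) = g (tau y x).
Proof.
move=> Xx Xy; apply: g_congr; [exact/X_tau/X_k | exact: X_tau | exact/tau_congr/kJ].
Qed.

Lemma ybr_reflection : is_reflection X (ybr mul S I) k.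
Proof.
move=> x y Xx Xy; rewrite /ybr /idk /=.
have [Xu Xt] := (X_sigma Xx (X_k Xy), X_tau Xx (X_k Xy)).
have [Xa Xb] := (X_sigma Xx Xy, X_tau Xx Xy).
have Ec : sigma (sigma x (k y)) (k (tau (k y) x)) = sigma (sigma x y) (k (tau y x)).
  by rewrite (sigma_k Xu Xt) (sigma_k Xa Xb) !sigma_tau g_tau_k.
congr (_, _); first exact: Ec.
rewrite tauE Ec.
set a := sigma x y; set c := sigma a _; set w := sigma (binv c) a.
have Xc : X c by exact: X_sigma Xa (X_k Xb).
have Xw : X w by exact: X_tau Xa (X_k Xb).
have Ea : a = sigma c w by rewrite sigmaKV.
rewrite sigma_k // -/a {1}Ea f_sigma // -sigma_wedge //; last exact: Xf.
by rewrite sigmaVK /k (g_tau_k Xa Xb) tau_tau.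
Qed.

End Reflection.

End Brace.

Theorem mainTheorem9 (N : zmodType) (mul : N -> N -> N)
  (S I X J : N -> Prop) (f g : N -> N) (wedge : N -> N -> N) :
  nilpotent_ring mul ->
  is_subring mul S -> is_ideal mul I ->
  (forall x, S x -> I x -> x = 0) ->
  (forall x, exists s i, S s /\ I i /\ x = s + i) ->
  is_solution X (ybr mul S I) ->
  is_ideal mul J -> (forall x, J x -> I x /\ X x) ->
  (forall x, X x -> X (f x)) -> (forall x, X x -> X (g x)) ->
  (forall x y, X x -> X y -> X (wedge x y)) ->
  (* f is G(X,r)-equivariant *)
  (forall x y, X x -> X y -> f (sigma mul S I x y) = sigma mul S I x (f y)) ->
  (forall x y z, X x -> X y -> X z ->
     sigma mul S I x (wedge y (g z)) = wedge (sigma mul S I x y) (g z)) ->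
  (forall x j, X x -> J j -> X (x + j) -> g (x + j) = g x) ->
  (forall x, X x -> J (wedge (f x) (g x) - x)) ->
  (forall x, exists! p : N * N, S p.1 /\ I p.2 /\ x = adj mul p.1 p.2) /\
  is_reflection X (ybr mul S I) (fun x => wedge (f x) (g x)).
Proof.
move=> Nnil Ssub Iideal SI0 SIsum [X_ybr _] Jideal JIX Xf Xg Xwedge f_sigma sigma_wedge gJ kJ.
have JI j : J j -> I j by case/JIX.
split; first exact: decomp_unique.
exact: (ybr_reflection Nnil Ssub Iideal SI0 SIsum Jideal JI X_ybr Xf Xg Xwedge
          f_sigma sigma_wedge gJ kJ).
Qed.
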